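(* Let $G$ be an infinite abelian group and $\mathcal S_G$ the family of small subsets of $G$. (1) If $G$ is finitely generated, then $\mathcal S_G$ is strongly invariant. (2) If $G$ is an infinitely generated free abelian group, then $\mathcal S_G$ is not auto-invariant.
   Context: A subset $L$ of a group $G$ is large if $G=FL$ for some finite $F\subset G$; $A\subset G$ is small if $L\setminus A$ is large for every large $L\subset G$. For an isomorphism $h:H\to K$ between subgroups of $G$, a family $\mathcal F\subset\mathcal P_G$ is $h$-invariant if for every $A\subset H$: $A\in\mathcal F$ iff $h(A)\in\mathcal F$. A left-invariant family $\mathcal F$ (i.e. $xF\in\mathcal F$ for $F\in\mathcal F$, $x\in G$) is auto-invariant if it is $h$-invariant for every injective homomorphism $h:G\to G$, and strongly invariant if it is $h$-invariant for every isomorphism $h:H\to K$ between subgroups of $G$. *)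

From HB Require Import structures.
From mathcomp Require Import all_boot all_order all_algebra.
Set Implicit Arguments. Unset Strict Implicit. Unset Printing Implicit Defensive.
Import GRing.Theory.
Local Open Scope ring_scope.

Section Defs.
Variable G : zmodType.

Definition subset_family := (G -> Prop) -> Prop.

Definition infinite_group : Prop := ~ exists s : seq G, forall g : G, g \in s.

(* L is large iff G = F + L for some finite F (additive notation for FL) *)
Definition large (L : G -> Prop) : Prop :=
  exists F : seq G, forall g : G, exists2 x, x \in F & exists l, L l /\ g = x + l.

Definition small (A : G -> Prop) : Prop :=
  forall L : G -> Prop, large L -> large (fun x => L x /\ ~ A x).

Definition small_family : subset_family := small.

Definition translate (x : G) (A : G -> Prop) : G -> Prop :=
  fun y => exists2 a, A a & y = x + a.

Definition left_invariant (F : subset_family) : Prop :=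
  forall A x, F A -> F (translate x A).

Definition image (h : G -> G) (A : G -> Prop) : G -> Prop :=
  fun y => exists2 a, A a & y = h a.

Definition is_subgroup (H : G -> Prop) : Prop :=
  H 0 /\ forall x y, H x -> H y -> H (x - y).

Definition subgroup_iso (H K : G -> Prop) (h : G -> G) : Prop :=
  (forall x y, H x -> H y -> h (x + y) = h x + h y) /\
  (forall x y, H x -> H y -> h x = h y -> x = y) /\
  (forall x, H x -> K (h x)) /\
  (forall y, K y -> exists2 x, H x & y = h x).

Definition h_invariant (H : G -> Prop) (h : G -> G) (F : subset_family) : Prop :=
  forall A : G -> Prop, (forall a, A a -> H a) -> (F A <-> F (image h A)).

Definition auto_invariant (F : subset_family) : Prop :=
  left_invariant F /\
  forall h : G -> G, (forall x y, h (x + y) = h x + h y) -> injective h ->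
    h_invariant (fun _ => True) h F.

Definition strongly_invariant (F : subset_family) : Prop :=
  left_invariant F /\
  forall (H K : G -> Prop) (h : G -> G), is_subgroup H -> is_subgroup K ->
    subgroup_iso H K h -> h_invariant H h F.

Definition finitely_generated : Prop :=
  exists s : seq G, forall g : G,
    exists z : 'I_(size s) -> int, g = \sum_(i < size s) s`_i *~ z i.

Definition free_basis (B : G -> Prop) : Prop :=
  (forall g : G, exists (s : seq G) (z : 'I_(size s) -> int),
      (forall x, x \in s -> B x) /\ g = \sum_(i < size s) s`_i *~ z i) /\
  (forall (s : seq G) (z : 'I_(size s) -> int),
      uniq s -> (forall x, x \in s -> B x) ->
      \sum_(i < size s) s`_i *~ z i = 0 -> forall i, z i = 0).

Definition free_abelian : Prop := exists B, free_basis B.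

End Defs.

From Pilot Require Import Defs.
From mathcomp Require Import all_boot all_order all_algebra.
From mathcomp Require Import zify.
From Stdlib Require Import Classical ClassicalEpsilon Lia.
Set Implicit Arguments. Unset Strict Implicit. Unset Printing Implicit Defensive.
Import GRing.Theory.
Local Open Scope ring_scope.

(* (1) Let [h : H -> K] be an isomorphism of subgroups and [A] a small subset
   of [H].  If [K] has infinite index in [G], every subset of [K] is small.
   Otherwise [H] has finite index as well: [h^-1] embeds the finite-index
   subgroup [K] into [H], and if [H] had infinite index, arbitrarily many
   translates of the image of a ball of [K] of radius [N], incongruent mod
   [H], would fit into a fixed number of translates of the ball of radius
   [q N], contradicting the polynomial growth of [K].  For a subset of a finite-index subgroup, smallness in [G] is the same
   as smallness relative to the subgroup, and relative smallness is
   transported by [h].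
   (2) If [G] is free abelian of infinite rank, doubling is an injective
   endomorphism whose image [2G] has infinite index, since distinct basis
   elements are incongruent mod [2G].  Hence [2G] is small while [G] is not. *)

Section Subgroups.
Variable G : zmodType.
Implicit Types (S T : G -> Prop) (D : seq G).

Lemma subgroupN S x : is_subgroup S -> S x -> S (- x).
Proof. by move=> [S0 SB] Sx; rewrite -sub0r; apply: SB. Qed.

Lemma subgroupD S x y : is_subgroup S -> S x -> S y -> S (x + y).
Proof. by move=> HS Sx Sy; rewrite -[y]opprK; apply: HS.2 => //; apply: subgroupN. Qed.

Lemma subgroup_sum S (I : Type) (r : seq I) (F : I -> G) :
  is_subgroup S -> (forall j, S (F j)) -> S (\sum_(j <- r) F j).
Proof. by move=> HS HF; apply: (big_ind S HS.1) => // x y; apply: subgroupD. Qed.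

Lemma subgroupMn S x n : is_subgroup S -> S x -> S (x *+ n).
Proof.
move=> HS Sx; elim: n => [|n IH]; first by rewrite mulr0n; exact: HS.1.
by rewrite mulrS; apply: subgroupD.
Qed.

Definition finite_index S := exists F0 : seq G, forall g, exists2 x, x \in F0 & S (g - x).

Definition incongruent S D := forall a b, a \in D -> b \in D -> S (a - b) -> a = b.

Lemma infinite_index_avoid S : ~ finite_index S ->
  forall D, exists y, forall d, d \in D -> ~ S (y - d).
Proof.
move=> nfin D; apply: NNPP => nex; apply: nfin; exists D => g.
apply: NNPP => ng; apply: nex; exists g => d dD Sgd; apply: ng; by exists d.
Qed.

Lemma incongruent_infinite_index S : is_subgroup S -> ~ finite_index S ->
  forall k, exists D, [/\ uniq D, size D = k & incongruent S D].
Proof.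
move=> HS nfin; elim=> [|k [D [uD sD HD]]]; first by exists [::].
have [y Hy] := infinite_index_avoid nfin D.
have yD : y \notin D by apply/negP => /Hy; rewrite subrr; apply; exact: HS.1.
exists (y :: D); split => /=; [by rewrite yD | by rewrite sD |].
move=> a b; rewrite !inE => /orP [/eqP ->|aD] /orP [/eqP ->|bD] //.
- by move=> /(Hy _ bD).
- by move=> /(subgroupN HS); rewrite opprB => /(Hy _ aD).
- exact: HD.
Qed.

Lemma incongruent_size_le S F0 D : is_subgroup S ->
  (forall g, exists2 x, x \in F0 & S (g - x)) -> uniq D -> incongruent S D ->
  (size D <= size F0)%N.
Proof.
move=> HS HF0 uD HD.
have rep g : {x | x \in F0 /\ S (g - x)}.
  by apply: constructive_indefinite_description; have [x ? ?] := HF0 g; exists x.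
rewrite -(size_map (fun g => sval (rep g))); apply: uniq_leq_size.
  rewrite map_inj_in_uniq // => a b aD bD Eab; apply: HD => //.
  have [_ Sa] := svalP (rep a); have [_ Sb] := svalP (rep b).
  by move: (HS.2 _ _ Sa Sb); rewrite Eab opprB addrA subrK.
by move=> _ /mapP [g _ ->]; case: (svalP (rep g)).
Qed.

End Subgroups.

Section RelativeSmallness.
Variable G : zmodType.
Implicit Types (S L A : G -> Prop) (F : seq G).

Definition large_in S L := exists F, forall g, S g ->
  exists2 x, x \in F & exists l, L l /\ g = x + l.

Definition small_in S A := forall L, (forall l, L l -> S l) -> large_in S L ->
  large_in S (fun x => L x /\ ~ A x).

Lemma large_inT L : large L <-> large_in (fun _ => True) L.
Proof. by split=> [[F HF]|[F HF]]; exists F => g //; exact: HF. Qed.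

Lemma small_inT A : small A <-> small_in (fun _ => True) A.
Proof.
split=> HA L; first by move=> _ /large_inT /HA /large_inT.
by move=> /large_inT /(HA L (fun _ _ => I)) /large_inT.
Qed.

Lemma large_in_sub S L L' : (forall x, L x -> L' x) -> large_in S L -> large_in S L'.
Proof.
move=> sLL' [F HF]; exists F => g /HF [x xF [l [Ll ->]]].
by exists x => //; exists l; split => //; apply: sLL'.
Qed.

Lemma small_in_sub S A A' : (forall a, A' a -> A a) -> small_in S A -> small_in S A'.
Proof.
move=> sA'A HA L LS /(HA L LS); apply: large_in_sub => x [Lx nAx].
by split => // /sA'A.
Qed.

Lemma small_sub A A' : (forall a, A' a -> A a) -> small A -> small A'.
Proof. by move=> sA'A /small_inT /(small_in_sub sA'A) /small_inT. Qed.

Lemma small_inU S A A' : small_in S A -> small_in S A' ->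
  small_in S (fun a => A a \/ A' a).
Proof.
move=> HA HA' L LS /(HA L LS) /(HA' _ (fun l (lL : L l /\ ~ A l) => LS l lL.1)).
by apply: large_in_sub => x [[Lx nAx] nA'x]; split => // [[]].
Qed.

Lemma small_in_translate S A x : is_subgroup S -> S x -> small_in S A ->
  small_in S (fun a => A (x + a)).
Proof.
move=> HS Sx HA L LS [F HF].
have LxS y : L (y - x) -> S y.
  by move=> /LS Sy; rewrite -(subrK x y); apply: subgroupD.
have : large_in S (fun y => L (y - x)).
  exists [seq f - x | f <- F] => g /HF [f fF [l [Ll ->]]].
  exists (f - x); first exact: map_f.
  by exists (l + x); rewrite addrK; split => //; rewrite addrA addrAC subrK.
move=> /(HA _ LxS) [F' HF'].
exists [seq f + x | f <- F'] => g /HF' [f fF [y [[Ly nAy] ->]]].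
exists (f + x); first exact: map_f.
exists (y - x); split; [split => // | by rewrite -addrA [x + _]addrC subrK].
by rewrite addrC subrK.
Qed.

Lemma left_invariant_small : left_invariant (@small_family G).
Proof.
move=> A x /small_inT HA; apply/small_inT.
have := small_in_translate (x := - x) (S := fun _ => True) (conj I (fun _ _ _ _ => I)) I HA.
by apply: small_in_sub => _ [a Aa ->]; rewrite addKr.
Qed.

(* If the [L]-parts of both [g] and [g - y] fell in [A], then [y] would be
   congruent mod [S] to a difference of two elements of [F], which [y] avoids. *)
Lemma small_infinite_index S A : is_subgroup S -> ~ finite_index S ->
  (forall a, A a -> S a) -> small A.
Proof.
move=> HS nfin AS L [F HF].
have [y Hy] := infinite_index_avoid nfin [seq f - f' | f <- F, f' <- F].
exists (F ++ [seq y + f | f <- F]) => g.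
have [f fF [l [Ll Eg]]] := HF g.
case: (classic (A l)) => Al; last by exists f; [rewrite mem_cat fF | exists l].
have [f' f'F [l' [Ll' Eg']]] := HF (g - y).
case: (classic (A l')) => Al'.
  exfalso; apply: (Hy (f - f')); first by apply/allpairsP; exists (f, f').
  have -> : y - (f - f') = l - l'.
    have -> : l = g - f by rewrite Eg addrC addKr.
    have -> : l' = g - y - f' by rewrite Eg' addrC addKr.
    by rewrite opprB !opprD !addrA !opprK (addrAC g) subrr add0r [- f + y]addrC addrAC.
  by apply: HS.2; apply: AS.
exists (y + f'); first by rewrite mem_cat map_f ?orbT.
by exists l'; split => //; rewrite -addrA -Eg' addrC subrK.
Qed.

Lemma small_in_finite_index S A : finite_index S -> small A -> small_in S A.
Proof.
move=> [F0 HF0] HA L LS [F HF]; have : large L.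
  exists [seq a + b | a <- F0, b <- F] => g.
  have [x xF0 Sgx] := HF0 g; have [f fF [l [Ll El]]] := HF _ Sgx.
  exists (x + f); first exact: allpairs_f.
  by exists l; split => //; rewrite -addrA -El addrC subrK.
by move=> /HA [F' HF']; exists F' => g _; exact: HF'.
Qed.

Lemma small_in_translates S A F : is_subgroup S -> small_in S A ->
  small_in S (fun a => exists2 x, x \in F & S x /\ A (x + a)).
Proof.
move=> HS HA; elim: F => [|x F IH]; first by apply: small_in_sub HA => a [].
case: (classic (S x)) => Sx; last first.
  by apply: small_in_sub IH => a [y]; rewrite inE => /orP [/eqP -> [] | yF Hy]; last exists y.
apply: small_in_sub (small_inU (small_in_translate HS Sx HA) IH).
move=> a [y]; rewrite inE => /orP [/eqP -> [_ Ha]|yF Hy]; first by left.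
by right; exists y.
Qed.

(* The trace on [S] of the finitely many translates [L - x], [x \in F0], is
   large in [S]; it meets only the translates [A - x] of [A]. *)
Lemma small_finite_index S A : is_subgroup S -> finite_index S ->
  (forall a, A a -> S a) -> small_in S A -> small A.
Proof.
move=> HS [F0 HF0] AS HA L [F HF].
pose M m := S m /\ exists2 x, x \in F0 & L (x + m).
have : large_in S M.
  exists [seq a + b | a <- F, b <- F0] => g Sg.
  have [f fF [l [Ll El]]] := HF g; have [x xF0 Slx] := HF0 l.
  exists (f + x); first exact: allpairs_f.
  exists (l - x); split; last by rewrite El -addrA [x + _]addrC subrK.
  by split => //; exists x => //; rewrite addrC subrK.
move=> /(small_in_translates F0 HS HA (fun m (Mm : M m) => Mm.1)) [F1 HF1].
exists [seq a + b | a <- [seq a + b | a <- F0, b <- F1], b <- map -%R F0] => g.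
have [x0 x0F0 Sg] := HF0 g.
have [f1 f1F1 [m [[[Sm [x xF0 Lxm]] nAm] Em]]] := HF1 _ Sg.
exists (x0 + f1 - x); first by apply: allpairs_f; [exact: allpairs_f | exact: map_f].
exists (x + m); split; last by rewrite addrA subrK -addrA -Em addrC subrK.
split => // Axm; apply: nAm; exists x => //; split => //.
by have := HS.2 _ _ (AS _ Axm) Sm; rewrite addrK.
Qed.

End RelativeSmallness.

Section FreeAbelian.
Variable G : zmodType.
Implicit Types (B : G -> Prop) (c : seq (G * int)) (P : seq G) (g : G).

Definition lincomb c := \sum_(p <- c) p.1 *~ p.2.

Definition coef c x := \sum_(p <- c | p.1 == x) p.2.

Definition scale_coefs c k := [seq (p.1, p.2 * k) | p <- c].

Lemma lincomb_cons y k c : lincomb ((y, k) :: c) = y *~ k + lincomb c.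
Proof. by rewrite /lincomb big_cons. Qed.

Lemma coef_cons y k c x : coef ((y, k) :: c) x = (if y == x then k else 0) + coef c x.
Proof. by rewrite /coef big_cons /=; case: (y == x); rewrite ?add0r. Qed.

Lemma lincomb_scale c k : lincomb (scale_coefs c k) = lincomb c *~ k.
Proof. by rewrite /lincomb big_map mulrz_suml; apply: eq_bigr => p _; rewrite mulrzA. Qed.

Lemma coef_scale c k x : coef (scale_coefs c k) x = coef c x * k.
Proof. by rewrite /coef big_map mulr_suml. Qed.

Lemma lincomb_coef c P : uniq P -> {subset map fst c <= P} ->
  lincomb c = \sum_(x <- P) x *~ coef c x.
Proof.
move=> uP cP; under [RHS]eq_bigr do rewrite mulrz_sumr big_mkcond.
rewrite /lincomb exchange_big /=; apply: eq_big_seq => p pc; rewrite -big_mkcond.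
rewrite (eq_bigl (pred1 p.1)) => [|x]; last exact: eq_sym.
by rewrite -big_filter filter_pred1_uniq ?big_seq1 // cP ?map_f.
Qed.

Lemma free_span B g : free_basis B ->
  exists c, (forall p, p \in c -> B p.1) /\ g = lincomb c.
Proof.
move=> [span _]; have [s [z [sB ->]]] := span g.
exists [seq (s`_i, z i) | i : 'I_(size s) <- index_enum 'I_(size s)]; split.
  by move=> _ /mapP [i _ ->]; apply: sB; rewrite mem_nth.
by rewrite /lincomb big_map.
Qed.

Lemma free_coef_eq0 B c x : free_basis B -> (forall p, p \in c -> B p.1) ->
  lincomb c = 0 -> coef c x = 0.
Proof.
move=> [_ indep] cB; set P := undup (map fst c).
have uP : uniq P := undup_uniq _.
rewrite (lincomb_coef uP) => [|y]; last by rewrite mem_undup.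
have PB y : y \in P -> B y by rewrite mem_undup => /mapP [p /cB ? ->].
rewrite (big_nth 0) big_mkord => /(indep _ _ uP PB) H.
case xP : (x \in P); first by rewrite -(nth_index 0 xP) (H (Ordinal (etrans (index_mem x P) xP))).
rewrite /coef big1_seq // => p /andP [/eqP px pc].
by move: xP; rewrite mem_undup -px map_f.
Qed.

Lemma free_torsion_free B g : free_basis B -> g + g = 0 -> g = 0.
Proof.
move=> HB; have [c [cB ->]] := free_span g HB => g2.
have coef0 x : coef c x = 0.
  have scB p : p \in scale_coefs c 2 -> B p.1 by move=> /mapP [q /cB ? ->].
  have := free_coef_eq0 x HB scB; rewrite lincomb_scale coef_scale mulrz_nat mulr2n.
  by move=> /(_ g2); lia.
rewrite (lincomb_coef (undup_uniq (map fst c))) => [|y]; last by rewrite mem_undup.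
by rewrite big1 // => x _; rewrite coef0.
Qed.

Lemma free_basis_sub_not_double B b b' : free_basis B -> B b -> B b' -> b != b' ->
  ~ exists g, b - b' = g + g.
Proof.
move=> HB Bb Bb' bb' [g Eg]; have [c [cB Eg']] := free_span g HB.
pose c' := (b, 1) :: (b', -1) :: scale_coefs c (-2).
have c'B p : p \in c' -> B p.1.
  by rewrite !inE => /orP [/eqP -> // | /orP [/eqP -> // | /mapP [q /cB ? ->]]].
have := free_coef_eq0 b HB c'B.
rewrite !lincomb_cons lincomb_scale -Eg' mulr1z mulrN1z mulrNz mulrz_nat mulr2n -Eg addrA subrr.
rewrite !coef_cons coef_scale eqxx eq_sym (negbTE bb') add0r => /(_ erefl).
by move: (coef c b) => k; clear; lia.
Qed.

Lemma free_basis_not_finite B : free_basis B -> ~ finitely_generated G ->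
  forall P, uniq P -> (forall x, x \in P -> B x) -> exists b, B b /\ b \notin P.
Proof.
move=> HB nfg P uP PB; apply: NNPP => nb; apply: nfg; exists P => g.
have BP b : B b -> b \in P by move=> Bb; apply: NNPP => /negP bP; apply: nb; exists b.
have [c [cB ->]] := free_span g HB.
exists (fun i => coef c P`_i).
rewrite (lincomb_coef uP) => [|_ /mapP [p /cB /BP ? ->] //].
by rewrite (big_nth 0) big_mkord.
Qed.

Lemma free_basis_lists B : free_basis B -> ~ finitely_generated G ->
  forall k, exists P, [/\ uniq P, (forall x, x \in P -> B x) & size P = k].
Proof.
move=> HB nfg; elim=> [|k [P [uP PB sP]]]; first by exists [::].
have [b [Bb bP]] := free_basis_not_finite HB nfg uP PB.
exists (b :: P); split => /=; [by rewrite bP | | by rewrite sP].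
by move=> x; rewrite inE => /orP [/eqP -> // | /PB].
Qed.

Definition doubles : G -> Prop := Defs.image (fun x => x + x) (fun _ => True).

Lemma doubles_subgroup : is_subgroup doubles.
Proof.
split; first by exists 0; rewrite ?addr0.
by move=> _ _ [a _ ->] [b _ ->]; exists (a - b); rewrite // opprD addrACA.
Qed.

Lemma doubles_infinite_index : free_abelian G -> ~ finitely_generated G ->
  ~ finite_index doubles.
Proof.
move=> [B HB] nfg [F0 HF0].
have [P [uP PB sP]] := free_basis_lists HB nfg (size F0).+1.
suff : (size P <= size F0)%N by rewrite sP ltnn.
apply: incongruent_size_le doubles_subgroup HF0 uP _ => a b aP bP [g _ Eg].
apply/eqP/contraT => ab.
by case: (free_basis_sub_not_double HB (PB a aP) (PB b bP) ab); exists g.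
Qed.

Lemma not_small_setT : ~ small (fun _ : G => True).
Proof.
move=> /(_ (fun _ => True)) [].
  by exists [:: 0] => g; exists 0; rewrite ?inE //; exists g; rewrite add0r.
by move=> F /(_ 0) [x _ [l [[_ []]]]].
Qed.

Lemma small_not_auto_invariant : free_abelian G -> ~ finitely_generated G ->
  ~ auto_invariant (@small_family G).
Proof.
move=> free nfg [_ Hinv]; have [B HB] := free.
have dbl_add (x y : G) : x + y + (x + y) = x + x + (y + y) by rewrite addrACA.
have dbl_inj : injective (fun x : G => x + x).
  move=> x y Exy; apply/eqP; rewrite -subr_eq0; apply/eqP; apply: (free_torsion_free HB).
  by rewrite addrACA -opprD Exy subrr.
apply: not_small_setT; apply/(Hinv _ dbl_add dbl_inj _ (fun _ _ => I)).
apply: (small_infinite_index doubles_subgroup (doubles_infinite_index free nfg)).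
by move=> _ [x _ ->]; exists x.
Qed.

End FreeAbelian.

Section Growth.
Variable G : zmodType.
Implicit Types (S T : G -> Prop) (t R w : seq G) (g : G).

Lemma sum_flatten_nseq (I : Type) (r : seq I) (c : I -> nat) (e : I -> G) :
  \sum_(x <- flatten [seq nseq (c i) (e i) | i <- r]) x = \sum_(i <- r) e i *+ c i.
Proof.
by rewrite big_flatten big_map; apply: eq_bigr => i _; rewrite big_nseq iter_addr_0.
Qed.

Lemma size_flatten_nseq (I : Type) (r : seq I) (c : I -> nat) (e : I -> G) :
  size (flatten [seq nseq (c i) (e i) | i <- r]) = (\sum_(i <- r) c i)%N.
Proof. by elim: r => [|i r IH] /=; rewrite ?big_nil ?big_cons // size_cat size_nseq IH. Qed.

Lemma all_flatten_nseq (I : Type) (r : seq I) (c : I -> nat) (e : I -> G) (P : pred G) :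
  (forall i, P (e i)) -> all P (flatten [seq nseq (c i) (e i) | i <- r]).
Proof.
move=> HP; elim: r => [|i r IH] //=; rewrite all_cat IH andbT.
by apply/allP => x /nseqP [-> _].
Qed.

Definition monoid_generates t := forall g, exists w, all (mem t) w /\ g = \sum_(x <- w) x.

Lemma finitely_generated_monoid : finitely_generated G -> exists t, monoid_generates t.
Proof.
move=> [s Hs]; exists (s ++ map -%R s) => g; have [z ->] := Hs g.
pose e i := if 0 <= z i then s`_i else - s`_i.
exists (flatten [seq nseq `|z i|%N (e i) | i <- index_enum 'I_(size s)]); split.
  apply: all_flatten_nseq => i; rewrite /e; case: ifP => _ /=.
    by rewrite mem_cat mem_nth.
  by rewrite mem_cat map_f ?orbT // mem_nth.
rewrite sum_flatten_nseq; apply: eq_bigr => i _; rewrite /e.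
by case: (z i) => m /=; [rewrite pmulrn | rewrite NegzE mulrNz mulNrn].
Qed.

Definition comb t (u : 'I_(size t) -> nat) := \sum_(i < size t) t`_i *+ u i.
Arguments comb : clear implicits.

(* The "ball" of radius [N] is the box of combinations of [t] with all
   coefficients below [N]; for abelian groups it is as good as a word ball. *)
Definition ball t N : seq G :=
  undup [seq comb t (fun i => val (f i)) | f : {ffun 'I_(size t) -> 'I_N}].

Lemma ballP t N x :
  reflect (exists u, (forall i, u i < N)%N /\ x = comb t u) (x \in ball t N).
Proof.
apply: (iffP idP).
  by rewrite mem_undup => /mapP [f _ ->]; exists (fun i => val (f i)); split => // i; exact: ltn_ord.
move=> [u [uN ->]]; rewrite mem_undup; apply/mapP.
exists [ffun i => Ordinal (uN i)]; first by rewrite mem_enum.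
by rewrite /comb; apply: eq_bigr => i _; rewrite ffunE.
Qed.

Lemma ball_le t M N x : (M <= N)%N -> x \in ball t M -> x \in ball t N.
Proof.
move=> MN /ballP [u [uM ->]]; apply/ballP; exists u; split => // i.
exact: leq_trans (uM i) MN.
Qed.

Lemma ball0 t N : (0 < N)%N -> 0 \in ball t N.
Proof. by move=> N0; apply/ballP; exists (fun _ => 0%N); split => //; rewrite /comb big1. Qed.

Lemma ballD t M N x y : x \in ball t M -> y \in ball t N -> x + y \in ball t (M + N).
Proof.
move=> /ballP [u [uM ->]] /ballP [v [vN ->]]; apply/ballP.
exists (fun i => u i + v i)%N; split; first by move=> i; rewrite -addSn leq_add // ltnW.
by rewrite /comb -big_split; apply: eq_bigr => i _; rewrite mulrnDr.
Qed.

Lemma ball_sum t (I : Type) (r : seq I) (F : I -> G) (A : I -> nat) :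
  (forall j, F j \in ball t (A j)) -> \sum_(j <- r) F j \in ball t (\sum_(j <- r) A j).+1.
Proof.
move=> HF; elim: r => [|j r IH]; first by rewrite !big_nil ball0.
by rewrite !big_cons -addnS; apply: ballD.
Qed.

Lemma ballMn t W x n : x \in ball t W -> x *+ n \in ball t (n * W).+1.
Proof.
move=> xW; elim: n => [|n IH]; first by rewrite mulr0n ball0.
by rewrite mulrS mulSn -addnS; apply: ballD.
Qed.

Lemma ball_comb t p (y : 'I_p -> G) (v : 'I_p -> nat) W N :
  (forall j, y j \in ball t W) -> (forall j, v j < N)%N ->
  \sum_(j < p) y j *+ v j \in ball t (p * (N * W).+1).+1.
Proof.
move=> yW vN; apply: (ball_le _ (ball_sum _ (A := fun j => (v j * W).+1) _)).
  rewrite ltnS -[X in (_ <= X * _)%N]card_ord -sum_nat_const; apply: leq_sum => j _.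
  by rewrite ltnS leq_mul2r (ltnW (vN j)) orbT.
by move=> j; apply: ballMn.
Qed.

Lemma word_ball t w : all (mem t) w -> \sum_(x <- w) x \in ball t (size w).+1.
Proof.
move=> /allP wt; apply/ballP.
exists (fun i : 'I_(size t) => count (fun x => index x t == i) w); split.
  by move=> i; rewrite ltnS count_size.
elim: w wt => [|a w IH] wt; first by rewrite big_nil /comb big1.
rewrite big_cons IH; last by move=> x xw; apply: wt; rewrite inE xw orbT.
have at_ : a \in t by apply: wt; rewrite inE eqxx.
pose ia := Ordinal (etrans (index_mem a t) at_).
rewrite /comb /= -[X in X + _](nth_index 0 at_).
rewrite (bigD1 ia) //= [in RHS](bigD1 ia) //= eqxx add1n mulrS addrA; congr (_ + _).
apply: eq_bigr => i nia; congr (_ *+ _).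
by rewrite (_ : (index a t == i) = false) //; apply: contraNF nia => /eqP E; apply/eqP/val_inj.
Qed.

Lemma ball_word t M g : g \in ball t M ->
  exists w, [/\ all (mem t) w, (size w <= size t * M)%N & g = \sum_(x <- w) x].
Proof.
move=> /ballP [u [uM ->]].
exists (flatten [seq nseq (u i) t`_i | i <- index_enum 'I_(size t)]); split.
- by apply: all_flatten_nseq => i; rewrite /= mem_nth.
- rewrite size_flatten_nseq -[X in (_ <= X * _)%N]card_ord -sum_nat_const.
  by apply: leq_sum => i _; apply: ltnW.
- by rewrite sum_flatten_nseq.
Qed.

Lemma ball_cover t (D : seq G) : monoid_generates t ->
  exists C, forall x, x \in D -> x \in ball t C.
Proof.
move=> gen; elim: D => [|a D [C HC]]; first by exists 0%N.
have [w [wt Ea]] := gen a.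
exists (maxn C (size w).+1) => x; rewrite inE => /orP [/eqP ->|xD].
  by rewrite Ea; apply: (ball_le (leq_maxr _ _)); exact: word_ball.
by apply: (ball_le (leq_maxl _ _)); exact: HC.
Qed.

Lemma ball_subgroup T R N x : is_subgroup T -> (forall r, r \in R -> T r) ->
  x \in ball R N -> T x.
Proof.
move=> HT RT /ballP [v [_ ->]]; apply: subgroup_sum => // j.
by apply: subgroupMn => //; apply: RT; rewrite mem_nth.
Qed.

(* Each coefficient below [q N] is a multiple of [N] below [q N] plus a
   remainder below [N]. *)
Lemma size_ball_mul t q N : (0 < N)%N ->
  (size (ball t (q * N)) <= q ^ size t * size (ball t N))%N.
Proof.
move=> N0.
pose E := [seq comb t (fun i => (val (f i) * N)%N) | f : {ffun 'I_(size t) -> 'I_q}].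
have sE : size E = (q ^ size t)%N by rewrite size_map -cardE card_ffun !card_ord.
rewrite -sE -(size_allpairs (fun a b : G => a + b)).
apply: uniq_leq_size; first exact: undup_uniq.
move=> x /ballP [u [uq ->]].
have uqN i : (u i %/ N < q)%N by rewrite ltn_divLR.
have -> : comb t u = comb t (fun i => (val (Ordinal (uqN i)) * N)%N) + comb t (fun i => u i %% N)%N.
  by rewrite /comb -big_split; apply: eq_bigr => i _ /=; rewrite -mulrnDr -divn_eq.
apply: allpairs_f; last by apply/ballP; exists (fun i => u i %% N)%N; split => // i; rewrite ltn_mod.
apply/mapP; exists [ffun i => Ordinal (uqN i)]; first by rewrite mem_enum.
by rewrite /comb; apply: eq_bigr => i _; rewrite ffunE.
Qed.

End Growth.

Section Embedding.
Variable G : zmodType.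
Implicit Types (S T : G -> Prop) (t R w : seq G) (g : G).

Definition additive_on T (psi : G -> G) :=
  forall a b, T a -> T b -> psi (a + b) = psi a + psi b.

Lemma additive_on0 T psi : is_subgroup T -> additive_on T psi -> psi 0 = 0.
Proof.
move=> HT psiD; have := psiD 0 0 HT.1 HT.1; rewrite addr0 => E.
by apply: (addrI (psi 0)); rewrite -E addr0.
Qed.

Lemma additive_on_sum T psi (I : Type) (r : seq I) (F : I -> G) :
  is_subgroup T -> additive_on T psi -> (forall j, T (F j)) ->
  psi (\sum_(j <- r) F j) = \sum_(j <- r) psi (F j).
Proof.
move=> HT psiD TF; elim: r => [|j r IH]; first by rewrite !big_nil (additive_on0 HT psiD).
by rewrite !big_cons psiD ?IH //; apply: subgroup_sum.
Qed.

Lemma additive_onMn T psi x n : is_subgroup T -> additive_on T psi -> T x ->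
  psi (x *+ n) = psi x *+ n.
Proof.
move=> HT psiD Tx; elim: n => [|n IH]; first by rewrite !mulr0n (additive_on0 HT psiD).
by rewrite !mulrS psiD ?IH //; apply: subgroupMn.
Qed.

(* Schreier: a finite-index subgroup [T] is generated by the finitely many
   elements [x + y - rep (x + y)], [x] a coset representative and [y] a
   generator of [G], with linear control of the word length. *)
Lemma schreier_words t T (F0 : seq G) : is_subgroup T ->
  (forall g, exists2 x, x \in F0 & T (g - x)) ->
  exists R : seq G, (forall r, r \in R -> T r) /\
   forall w : seq G, all (mem t) w -> exists2 x, x \in F0 & exists w' : seq G,
     [/\ all (mem R) w', (size w' <= (size w).+1)%N & \sum_(y <- w) y = x + \sum_(y <- w') y].
Proof.
move=> HT HF0.
have rep g : {x | x \in F0 /\ T (g - x)}.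
  by apply: constructive_indefinite_description; have [x ? ?] := HF0 g; exists x.
pose r g := sval (rep g).
have rF0 g : r g \in F0 by case: (svalP (rep g)).
have rT g : T (g - r g) by case: (svalP (rep g)).
exists ([seq x + y - r (x + y) | x <- F0, y <- t] ++ [:: 0 - r 0]); split.
  move=> z; rewrite mem_cat => /orP [/allpairsP [[x y] [_ _ ->]] //|].
  by rewrite inE => /eqP ->.
elim=> [|a w IH] /=.
  move=> _; exists (r 0) => //; exists [:: 0 - r 0]; split => //=.
    by rewrite andbT mem_cat inE eqxx orbT.
  by rewrite big_cons !big_nil addr0 addrC subrK.
move=> /andP [at_ wt]; have [x xF0 [w' [w'R sw' Ew]]] := IH wt.
exists (r (x + a)) => //; exists (x + a - r (x + a) :: w'); split => //=.
  by rewrite w'R andbT mem_cat (allpairs_f (fun x y => x + y - r (x + y)) xF0 at_).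
by rewrite !big_cons Ew [RHS]addrA [r _ + _]addrC subrK addrA [a + x]addrC.
Qed.

Lemma schreier_ball t T (F0 : seq G) : is_subgroup T ->
  (forall g, exists2 x, x \in F0 & T (g - x)) ->
  exists R : seq G, (forall r, r \in R -> T r) /\ forall M g, g \in ball t M ->
    g \in [seq x + b | x <- F0, b <- ball R (size t * M).+2].
Proof.
move=> HT HF0; have [R [RT HR]] := schreier_words t HT HF0.
exists R; split => // M _ /ball_word [w [wt sw ->]].
have [x xF0 [w' [w'R sw' ->]]] := HR w wt.
apply: allpairs_f => //; apply: ball_le (word_ball w'R).
by rewrite !ltnS (leq_trans sw').
Qed.

Section FiniteIndexEmbedding.
Variables (t : seq G) (S T : G -> Prop) (F0 : seq G) (psi : G -> G).
Hypotheses (gen : monoid_generates t) (HS : is_subgroup S) (HT : is_subgroup T).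
Hypothesis HF0 : forall g, exists2 x, x \in F0 & T (g - x).
Hypotheses (psiD : additive_on T psi) (psiS : forall a, T a -> S (psi a)).
Hypothesis psi_inj : forall a b, T a -> T b -> psi a = psi b -> a = b.

Lemma uniq_translates R (ys : seq G) N : (forall r, r \in R -> T r) ->
  uniq ys -> incongruent S ys -> uniq [seq y + psi rho | y <- ys, rho <- ball R N].
Proof.
move=> RT uys Hys; apply: allpairs_uniq => //; first exact: undup_uniq.
move=> [y rho] [y' rho'] /allpairsP [[a b] [ay bR [-> ->]]].
move=> /allpairsP [[a' b'] [ay' bR' [-> ->]]] /= E.
have Tb := ball_subgroup HT RT bR; have Tb' := ball_subgroup HT RT bR'.
have Eaa' : a = a'.
  apply: Hys => //; have -> : a - a' = psi b' - psi b.
    have -> : a = a' + psi b' - psi b by rewrite -E addrK.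
    by rewrite [a' + _]addrC (addrAC (psi b')) addrK.
  by apply: HS.2; apply: psiS.
by move: E; rewrite Eaa' => /addrI /psi_inj E; rewrite E.
Qed.

Lemma ball_image R W N x : (forall r, r \in R -> T r) ->
  (forall r, r \in R -> psi r \in ball t W) ->
  x \in ball R N -> psi x \in ball t (size R * (N * W).+1).+1.
Proof.
move=> RT RW /ballP [v [vN ->]].
have TRv (j : 'I_(size R)) : T (R`_j *+ v j) by apply: subgroupMn => //; apply: RT; rewrite mem_nth.
rewrite /comb (additive_on_sum _ HT psiD TRv).
under eq_bigr do rewrite (additive_onMn _ HT psiD (RT _ (mem_nth 0 (ltn_ord _)))).
by apply: ball_comb => // j; apply: RW; rewrite mem_nth.
Qed.

(* Otherwise [(size F0 * q ^ size R).+1] translates of [psi (ball R N)],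
   incongruent mod [S], fit in [F0 + ball R (q N)], which has at most
   [size F0 * q ^ size R] times as many elements as [ball R N]. *)
Lemma finite_index_of_embedding : finite_index S.
Proof.
apply: NNPP => nfin.
have [R [RT HR]] := schreier_ball t HT HF0.
have [W RW] := ball_cover (map psi R) gen.
pose p := size R; pose n := size t.
pose q := (n * (1 + p * W + p) + 2)%N.
have [ys [uys sys Hys]] := incongruent_infinite_index HS nfin (size F0 * q ^ p).+1.
have [C HC] := ball_cover ys gen; pose N := C.+1.
have psiRW r : r \in R -> psi r \in ball t W by move=> rR; apply: RW; rewrite map_f.
have sYZ : {subset [seq y + psi rho | y <- ys, rho <- ball R N] <=
                   [seq x + b | x <- F0, b <- ball R (q * N)]}.
  move=> _ /allpairsP [[y rho] [yys rhoR ->]] /=.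
  have /HR : y + psi rho \in ball t (C + (p * (N * W).+1).+1).
    by apply: ballD; [exact: HC | exact: ball_image].
  move=> /allpairsP [[x b] [xF0 bR ->]]; apply: allpairs_f => //.
  by apply: ball_le bR; rewrite /q /N; nia.
have := uniq_leq_size (uniq_translates N RT uys Hys) sYZ.
rewrite !size_allpairs sys => /leq_trans /(_ (leq_mul (leqnn _) (size_ball_mul R q (ltn0Sn C)))).
have N0 : (0 < size (ball R N))%N by case: (ball R N) (ball0 R (ltn0Sn C)).
by rewrite mulnA leq_pmul2r // ltnn.
Qed.

End FiniteIndexEmbedding.
End Embedding.

Section SubgroupIsomorphisms.
Variable G : zmodType.
Implicit Types (H K X Y L A : G -> Prop).

Lemma large_in_image X Y (f : G -> G) L : is_subgroup X -> additive_on X f ->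
  (forall y, Y y -> exists2 x, X x & y = f x) -> (forall l, L l -> X l) ->
  large_in X L -> large_in Y (Defs.image f L).
Proof.
move=> HX fD fsurj LX [F HF]; exists (map f F) => _ /fsurj [g Xg ->].
have [x xF [l [Ll El]]] := HF g Xg.
have Xx : X x by rewrite -(addrK l x) -El; apply: HX.2 => //; apply: LX.
exists (f x); first exact: map_f.
by exists (f l); split; [exists l | rewrite El fD //; exact: LX].
Qed.

Lemma subgroup_iso_inverse H K (h : G -> G) :
  is_subgroup H -> is_subgroup K -> subgroup_iso H K h ->
  exists k : G -> G, [/\ subgroup_iso K H k, (forall y, K y -> h (k y) = y)
                       & forall x, H x -> k (h x) = x].
Proof.
move=> HH HK [hD [hinj [hK hsurj]]].
have pre y : {x | K y -> H x /\ y = h x}.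
  apply: constructive_indefinite_description.
  case: (classic (K y)) => Ky; last by exists 0.
  by have [x Hx ->] := hsurj y Ky; exists x.
pose k y := sval (pre y).
have kH y : K y -> H (k y) by move=> Ky; case: (svalP (pre y) Ky).
have hk y : K y -> h (k y) = y by move=> Ky; case: (svalP (pre y) Ky).
have kh x : H x -> k (h x) = x.
  by move=> Hx; apply: hinj => //; [apply/kH/hK | rewrite hk //; exact: hK].
exists k; split => //; split; [|split; [|split]].
- move=> a b Ka Kb; have Kab := subgroupD HK Ka Kb.
  apply: hinj; [exact: kH | exact: (subgroupD HH (kH _ Ka) (kH _ Kb)) |].
  by rewrite (hk _ Kab) (hD _ _ (kH _ Ka) (kH _ Kb)) (hk _ Ka) (hk _ Kb).
- by move=> a b Ka Kb E; rewrite -(hk a Ka) -(hk b Kb) E.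
- exact: kH.
- by move=> x Hx; exists (h x); [exact: hK | rewrite kh].
Qed.

Lemma small_image H K (h : G -> G) A : finitely_generated G ->
  is_subgroup H -> is_subgroup K -> subgroup_iso H K h ->
  (forall a, A a -> H a) -> small A -> small (Defs.image h A).
Proof.
move=> fg HH HK iso AH sA; have [hD [hinj [hK hsurj]]] := iso.
have [k [[kD [kinj [kH ksurj]]] hk kh]] := subgroup_iso_inverse HH HK iso.
have hAK : forall y, Defs.image h A y -> K y by move=> _ [a /AH Ha ->]; exact: hK.
case: (classic (finite_index K)) => finK; last exact: small_infinite_index HK finK hAK.
have finH : finite_index H.
  have [t gen] := finitely_generated_monoid fg; have [F0 HF0] := finK.
  exact: finite_index_of_embedding gen HH HK HF0 kD kH kinj.
apply: (small_finite_index HK finK hAK) => L' L'K /(large_in_image HK kD ksurj L'K).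
have kL'H : forall l, Defs.image k L' l -> H l by move=> _ [l' /L'K ? ->]; exact: kH.
move=> /(small_in_finite_index finH sA kL'H).
move=> /(large_in_image HH hD hsurj (fun l (Hl : _ /\ ~ A l) => kL'H l Hl.1)).
apply: large_in_sub => _ [l [[l' L'l' ->] nAl] ->]; rewrite hk; last exact: L'K.
split => // [[a Aa]]; rewrite -(hk _ (L'K _ L'l')) => E.
by apply: nAl; rewrite -(hinj _ _ (AH _ Aa) (kH _ (L'K _ L'l')) (esym E)).
Qed.

Lemma small_strongly_invariant : finitely_generated G -> strongly_invariant (@small_family G).
Proof.
move=> fg; split; first exact: left_invariant_small.
move=> H K h HH HK iso A AH; split; first exact: (small_image fg HH HK iso AH).
have [k [isok _ kh]] := subgroup_iso_inverse HH HK iso.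
have hAK y : Defs.image h A y -> K y by move=> [a /AH Ha ->]; apply: iso.2.2.1.
move=> /(small_image fg HK HH isok hAK); apply: small_sub => a Aa.
by exists (h a); [exists a | rewrite kh //; exact: AH].
Qed.

End SubgroupIsomorphisms.

Theorem proposition5p8 (G : zmodType) :
  infinite_group G ->
  (finitely_generated G -> strongly_invariant (@small_family G)) /\
  (free_abelian G -> ~ finitely_generated G -> ~ auto_invariant (@small_family G)).
Proof.
move=> _; split; first exact: small_strongly_invariant.
exact: small_not_auto_invariant.
Qed.
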